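(* Let $\mathbf K$ be a commutative field, $p\in\mathbb N$, and $\alpha:\mathcal M_p\to\mathbf K$. Then $\alpha$ is an automatic function (with input alphabet $\{0,\dots,p-1\}$ and output alphabet $\mathbf K$) if and only if $\alpha\in\mathrm{Rec}_p(\mathbf K)$ and the shift-monoid of $\alpha$ is finite.
   Context: $\mathcal M_p$ is the free monoid of words over $\{0,\dots,p-1\}$. For $A:\mathcal M_p\to\mathbf K$ and $S\in\mathcal M_p$, $(\rho(S)A)[U]=A[US]$. $\mathrm{Rec}_p(\mathbf K)$ is the set of $A$ whose span $\overline{A}^{rec}$ of $\{\rho(S)A:S\in\mathcal M_p\}$ is finite-dimensional, and the shift-monoid of $A$ is the set of restrictions of the maps $\rho(S)$ to $\overline{A}^{rec}$. An initial automaton with input alphabet $X$ and output alphabet $Y$ consists of a set $\mathcal V$ of states, an initial state $v_*\in\mathcal V$, a transition function $\delta:\mathcal V\times X\to\mathcal V$ and an output function $w:\mathcal V\to Y$; it defines $\alpha:\mathcal M_X\to Y$ by $\alpha(x_1\dots x_n)=w(v)$ where $v$ is reached from $v_*$ by successively applying $\delta(\cdot,x_1),\dots,\delta(\cdot,x_n)$. It is finite-state if $X$ and $\mathcal V$ are finite. A function $\mathcal M_X\to Y$ is automatic if it is defined by some finite-state initial automaton. *)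

From mathcomp Require Import all_boot all_order all_algebra.
Set Implicit Arguments. Unset Strict Implicit. Unset Printing Implicit Defensive.
Import GRing.Theory.
Local Open Scope ring_scope.

Definition word (p : nat) := seq 'I_p.

Definition rho {p : nat} {K : Type} (S : word p) (A : word p -> K) : word p -> K :=
  fun U => A (U ++ S).

Definition in_rec_span {p : nat} {K : fieldType} (A : word p -> K) (f : word p -> K) : Prop :=
  exists (n : nat) (Ts : 'I_n -> word p) (c : 'I_n -> K),
    forall U, f U = \sum_(i < n) c i * rho (Ts i) A U.

(* The span of { rho(S) A } is finite-dimensional: it is contained in the span
   of finitely many functions. *)
Definition in_Rec {p : nat} {K : fieldType} (A : word p -> K) : Prop :=
  exists (n : nat) (B : 'I_n -> (word p -> K)),
    forall f, in_rec_span A f ->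
      exists c : 'I_n -> K, forall U, f U = \sum_(i < n) c i * B i U.

(* The shift-monoid of A (restrictions of the rho(S) to the span) is finite:
   finitely many words represent every restriction. *)
Definition shift_monoid_finite {p : nat} {K : fieldType} (A : word p -> K) : Prop :=
  exists Ss : seq (word p), forall S : word p,
    exists2 S', S' \in Ss &
      forall f, in_rec_span A f -> forall U, rho S f U = rho S' f U.

Definition automatic {p : nat} {Y : Type} (alpha : word p -> Y) : Prop :=
  exists (V : finType) (v0 : V) (delta : V -> 'I_p -> V) (w : V -> Y),
    forall u : word p, alpha u = w (foldl delta v0 u).

(** If an automaton computes [alpha], every function in the span of the shifts
    [rho S alpha] factors through the state reached, so the span is spanned by
    the indicators of the finitely many states, and [rho S] acts on it only
    through the transition map [v |-> delta*(v, S)], of which there are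
    finitely many.  Conversely, identifying words with equal action on the
    span is a right congruence of finite index on which [alpha] is constant;
    its classes are the states of an automaton computing [alpha]
    (Myhill-Nerode). *)

From mathcomp Require Import all_boot all_order all_algebra.
From Stdlib Require Import Classical_Prop ClassicalEpsilon.
Set Implicit Arguments. Unset Strict Implicit. Unset Printing Implicit Defensive.
Import GRing.Theory.
Local Open Scope ring_scope.

Lemma exists_transversal (X : eqType) (F : finType) (h : X -> F) :
  exists s : seq X, forall x, exists2 y, y \in s & h y = h x.
Proof.
suff [s hs] : exists s : seq X, forall x, h x \in enum F ->
    exists2 y, y \in s & h y = h x.
  by exists s => x; apply: hs; rewrite mem_enum.
elim: (enum F) => [|a l [s hs]]; first by exists [::].
have [[y hya]|noy] := classic (exists y, h y = a).
- exists (y :: s) => x; rewrite in_cons => /orP[/eqP hxa|/hs[z zs hzx]].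
  + by exists y; rewrite ?mem_head // hya hxa.
  + by exists z; rewrite // in_cons zs orbT.
- exists s => x; rewrite in_cons => /orP[/eqP hxa|/hs //].
  by case: noy; exists x.
Qed.

Section MyhillNerode.

Variables (p : nat) (Y : Type) (alpha : word p -> Y).
Variable eqv : word p -> word p -> Prop.
Hypothesis eqv_trans : forall S T W, eqv S T -> eqv T W -> eqv S W.
Hypothesis eqv_rcons : forall S T x, eqv S T -> eqv (rcons S x) (rcons T x).
Hypothesis eqv_alpha : forall S T, eqv S T -> alpha S = alpha T.
Variable reps : seq (word p).
Hypothesis reps_cover : forall S, exists2 T, T \in reps & eqv S T.

Let state := 'I_(size reps).
Let rep (i : state) : word p := nth [::] reps i.

Lemma exists_rep_state (S : word p) : exists i : state, eqv S (rep i).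
Proof.
have [T Treps ST] := reps_cover S.
by exists (Ordinal (etrans (index_mem T reps) Treps)); rewrite /rep nth_index.
Qed.

Let class (S : word p) : state :=
  proj1_sig (constructive_indefinite_description _ (exists_rep_state S)).

Let eqv_class (S : word p) : eqv S (rep (class S)).
Proof. by rewrite /class; case: constructive_indefinite_description. Qed.

Let next (i : state) (x : 'I_p) : state := class (rcons (rep i) x).

Lemma eqv_run (u : word p) : eqv u (rep (foldl next (class [::]) u)).
Proof.
elim/last_ind: u => [|u x IHu]; first exact: eqv_class.
by rewrite foldl_rcons; apply: eqv_trans (eqv_rcons x IHu) (eqv_class _).
Qed.

Lemma automatic_of_right_congruence : automatic alpha.
Proof.
exists (state : finType), (class [::]), next, (alpha \o rep) => u /=.
exact/eqv_alpha/eqv_run.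
Qed.

End MyhillNerode.

Section ShiftEquivalence.

Variables (K : fieldType) (p : nat) (alpha : word p -> K).

Definition shift_equiv (S T : word p) : Prop :=
  forall f, in_rec_span alpha f -> forall U, rho S f U = rho T f U.

Lemma rho_cat (S T : word p) (f : word p -> K) U :
  rho (S ++ T) f U = rho S (rho T f) U.
Proof. by rewrite /rho catA. Qed.

Lemma rec_span_self : in_rec_span alpha alpha.
Proof.
by exists 1%N, (fun=> [::]), (fun=> 1) => U; rewrite big_ord1 mul1r /rho cats0.
Qed.

Lemma rec_span_rho (S : word p) f :
  in_rec_span alpha f -> in_rec_span alpha (rho S f).
Proof.
move=> [n [Ts [c hf]]]; exists n, (fun i => S ++ Ts i), c => U.
by rewrite /rho hf; apply: eq_bigr => i _; rewrite /rho catA.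
Qed.

Lemma shift_equiv_trans (S T W : word p) :
  shift_equiv S T -> shift_equiv T W -> shift_equiv S W.
Proof. by move=> eST eTW f hf U; rewrite eST ?eTW. Qed.

Lemma shift_equiv_rcons (S T : word p) x :
  shift_equiv S T -> shift_equiv (rcons S x) (rcons T x).
Proof.
move=> eST f hf U; rewrite -!cats1 !rho_cat.
exact/eST/rec_span_rho.
Qed.

Lemma shift_equiv_alpha (S T : word p) : shift_equiv S T -> alpha S = alpha T.
Proof. by move=> eST; apply: (eST _ rec_span_self [::]). Qed.

End ShiftEquivalence.

Lemma in_Rec_of_factor (K : fieldType) (p : nat) (A : word p -> K)
    (V : finType) (st : word p -> V) :
  (forall f, in_rec_span A f -> exists g : V -> K, forall U, f U = g (st U)) ->
  in_Rec A.
Proof.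
move=> factor; exists #|V|, (fun j U => (st U == enum_val j)%:R).
move=> f /factor[g hg]; exists (g \o enum_val) => U /=.
rewrite -(big_enum_val (A := predT) (fun v => g v * (st U == v)%:R)) /=.
rewrite (bigD1 (st U)) //= eqxx mulr1 big1 ?addr0 //.
by move=> v; rewrite eq_sym => /negbTE->; rewrite mulr0.
Qed.

Section AutomaticShifts.

Variables (K : fieldType) (p : nat) (alpha : word p -> K).
Variables (V : finType) (v0 : V) (delta : V -> 'I_p -> V) (w : V -> K).
Hypothesis alpha_run : forall u, alpha u = w (foldl delta v0 u).

Lemma rec_span_factor f :
  in_rec_span alpha f ->
  exists g : V -> K, forall U, f U = g (foldl delta v0 U).
Proof.
move=> [n [Ts [c hf]]].
exists (fun v => \sum_(i < n) c i * w (foldl delta v (Ts i))) => U.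
by rewrite hf; apply: eq_bigr => i _; rewrite /rho alpha_run foldl_cat.
Qed.

Lemma shift_equiv_of_transition (S T : word p) :
  (forall v, foldl delta v S = foldl delta v T) -> shift_equiv alpha S T.
Proof.
move=> eST f /rec_span_factor[g hg] U.
by rewrite /rho !hg !foldl_cat eST.
Qed.

End AutomaticShifts.

Theorem mainTheorem17 (K : fieldType) (p : nat) (alpha : word p -> K) :
  automatic alpha <-> (in_Rec alpha /\ shift_monoid_finite alpha).
Proof.
split.
- move=> [V [v0 [delta [w alpha_run]]]]; split.
    exact: in_Rec_of_factor (rec_span_factor alpha_run).
  have [Ss hSs] := exists_transversal (fun S : word p => [ffun v => foldl delta v S]).
  exists Ss => S; have [T TSs eST] := hSs S.
  exists T => //; apply: (shift_equiv_of_transition alpha_run) => v.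
  by move/(congr1 (fun t : {ffun V -> V} => t v)): eST; rewrite !ffunE.
- move=> [_ [Ss hSs]].
  exact: (automatic_of_right_congruence (@shift_equiv_trans _ _ alpha)
            (@shift_equiv_rcons _ _ alpha) (@shift_equiv_alpha _ _ alpha) hSs).
Qed.
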